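(* Let $G$ be an unweighted loopless graph on vertex set $[n]$ and let $t\ge 2$. Suppose that for all $\mathbf{a},\mathbf{b}\in\{0,1\}^n$, \[ V_{K_{t-1}}(\mathbf{a},\dots,\mathbf{a};G)\, V_{K_{t-1}}(\mathbf{b},\dots,\mathbf{b};G)\le \sum_{\phi:[t-1]\times\{1,2\}\to[n]}\ \prod_{\substack{i,j\in[t-1]\\ i\ne j}}G(\phi(i,1),\phi(j,2))\prod_{i\in[t-1]}a_{\phi(i,1)}b_{\phi(i,2)}. \] Then $\hom(K_t,G)^2\le\hom(K_t\times K_2,G)$.
   Context: $G(u,v)\in\{0,1\}$ is the adjacency indicator of $G$. For $s\ge1$ and $\mathbf{x}\in\mathbb{R}^n$, $V_{K_s}(\mathbf{x},\dots,\mathbf{x};G)=\sum_{\phi:[s]\to[n]}\prod_{\{i,j\}\in\binom{[s]}{2}}G(\phi(i),\phi(j))\prod_{r\in[s]}x_{\phi(r)}$ (an empty product is $1$). $\hom(H,G)$ is the number of homomorphisms from $H$ to $G$. The tensor product $K_t\times K_2$ has vertex set $[t]\times\{1,2\}$ with $(i,1)$ adjacent to $(j,2)$ iff $i\ne j$. *)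

From mathcomp Require Import all_boot.
Set Implicit Arguments. Unset Strict Implicit. Unset Printing Implicit Defensive.

Definition simple_graph (T : finType) (G : rel T) : Prop :=
  (forall u v, G u v = G v u) /\ (forall u, G u u = false).

Definition hom (VH VG : finType) (H : rel VH) (G : rel VG) : nat :=
  #|[set phi : {ffun VH -> VG} | [forall x, forall y, H x y ==> G (phi x) (phi y)]]|.

Definition complete_graph (t : nat) : rel 'I_t := fun i j => i != j.
Arguments complete_graph : clear implicits.

Definition tensor_graph (T1 T2 : finType) (H1 : rel T1) (H2 : rel T2)
  : rel (T1 * T2) := fun x y => H1 x.1 y.1 && H2 x.2 y.2.

(* V_{K_s}(x,...,x;G) for x : [n] -> {0,1} (bool coerced to 0/1) *)
Definition VK (n s : nat) (G : rel 'I_n) (x : 'I_n -> bool) : nat :=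
  \sum_(phi : {ffun 'I_s -> 'I_n})
     ((\prod_(i < s) \prod_(j < s | i < j) G (phi i) (phi j)) *
      \prod_(r < s) x (phi r)).

(* The right-hand side of the hypothesis, with [s] x {1,2} = 'I_s * 'I_2
   (index 0 for 1, index 1 for 2). *)
Definition VKK2 (n s : nat) (G : rel 'I_n) (a b : 'I_n -> bool) : nat :=
  \sum_(phi : {ffun 'I_s * 'I_2 -> 'I_n})
     ((\prod_(i < s) \prod_(j < s | i != j)
          G (phi (i, ord0)) (phi (j, ord_max))) *
      \prod_(i < s) (a (phi (i, ord0)) * b (phi (i, ord_max)))).

From mathcomp Require Import all_boot.
Set Implicit Arguments. Unset Strict Implicit. Unset Printing Implicit Defensive.

(* Splitting off the last vertex of K_t, mapped to v, writes hom(K_t, G) as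
   the sum over v of V_{K_{t-1}}(G v), the indicator of the neighbourhood of v
   playing the role of x.  Splitting off the last pair (t,1), (t,2) of
   K_t x K_2, mapped to u and v, writes hom(K_t x K_2, G) as the sum over u, v
   of the right-hand side of the hypothesis at a = G v, b = G u.  Expanding
   hom(K_t, G)^2 as a double sum, the hypothesis compares the two termwise. *)

Lemma prodn_bool (I : finType) (P : pred I) (b : I -> bool) :
  \prod_(i | P i) (b i : nat) = [forall (i | P i), b i].
Proof.
by rewrite -big_andE; apply/esym/big_morph => // x y; rewrite mulnb.
Qed.

Lemma hom_sum (VH VG : finType) (H : rel VH) (G : rel VG) :
  hom H G = \sum_(phi : {ffun VH -> VG})
              [forall x, forall y, H x y ==> G (phi x) (phi y)].
Proof.
rewrite /hom -sum1_card big_mkcond /=.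
by apply: eq_bigr => phi _; rewrite inE; case: ifP.
Qed.

Lemma forall_neq_ordS (s : nat) (V W : Type) (R : V -> W -> bool)
    (f0 : 'I_s.+1 -> V) (f1 : 'I_s.+1 -> W) (v0 : V) (v1 : W)
    (g0 : 'I_s -> V) (g1 : 'I_s -> W) :
    f0 ord_max = v0 -> f1 ord_max = v1 ->
    (forall i, f0 (lift ord_max i) = g0 i) ->
    (forall i, f1 (lift ord_max i) = g1 i) ->
  [forall i, forall j, (i != j) ==> R (f0 i) (f1 j)] =
  [&& [forall i, forall j, (i != j) ==> R (g0 i) (g1 j)],
      [forall r, R v0 (g1 r)] & [forall r, R (g0 r) v1]].
Proof.
move=> f0max f1max f0lift f1lift.
apply/forallP/and3P => [H | [/forallP A /forallP B /forallP C] i].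
  have {}H i j : i != j -> R (f0 i) (f1 j).
    by move=> nij; move/forallP/(_ j)/implyP: (H i); apply.
  split; apply/forallP => i.
  - apply/forallP => j; apply/implyP => nij.
    by rewrite -f0lift -f1lift H // (inj_eq lift_inj).
  - by rewrite -f0max -f1lift H // neq_lift.
  - by rewrite -f0lift -f1max H // eq_sym neq_lift.
apply/forallP => j; apply/implyP.
case: (unliftP ord_max i) => [i' ->|->]; case: (unliftP ord_max j) => [j' ->|->];
  rewrite ?f0max ?f1max ?f0lift ?f1lift ?eqxx //.
by rewrite (inj_eq lift_inj) => nij; move/forallP/(_ j')/implyP: (A i'); apply.
Qed.

Lemma forall_neq_lt (m : nat) (R : rel 'I_m) : symmetric R ->
    [forall i, forall j, (i != j) ==> R i j] =
  [forall i : 'I_m, forall j : 'I_m, (i < j) ==> R i j].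
Proof.
move=> Rsym; apply/forallP/forallP => H i; apply/forallP => j; apply/implyP.
  by rewrite ltn_neqAle => /andP [nij _]; move/forallP/(_ j)/implyP: (H i); apply.
move=> nij; case: (ltngtP i j) => [ij | ji | eij].
- by move/forallP/(_ j)/implyP: (H i); apply.
- by rewrite Rsym; move/forallP/(_ i)/implyP: (H j); apply.
- by move: nij; rewrite (val_inj eij) eqxx.
Qed.

Lemma ord2_neq (k l : 'I_2) :
  k != l -> (k = ord0 /\ l = ord_max) \/ (k = ord_max /\ l = ord0).
Proof.
by case: k l => [[|[|//]] ?] [[|[|//]] ?] //= _; [left | right]; split; apply: val_inj.
Qed.

Lemma forall_tensor_K2 (T V : finType) (H : rel T) (G : rel V)
    (phi : T * 'I_2 -> V) : symmetric H -> symmetric G ->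
  [forall x, forall y,
     tensor_graph H (complete_graph 2) x y ==> G (phi x) (phi y)] =
  [forall x, forall y, H x y ==> G (phi (x, ord0)) (phi (y, ord_max))].
Proof.
move=> Hsym Gsym; apply/forallP/forallP => E x; apply/forallP => y; apply/implyP.
  move=> Hxy; move/forallP/(_ (y, ord_max))/implyP: (E (x, ord0)); apply.
  by rewrite /tensor_graph Hxy.
case: x y => [x k] [y l] /andP [/= Hxy /ord2_neq [[-> ->] | [-> ->]]].
  by move/forallP/(_ y)/implyP: (E x); apply.
by rewrite Gsym; move/forallP/(_ x)/implyP: (E y); apply; rewrite Hsym.
Qed.

Section FfunOrdS.
Variables (T : finType) (s : nat).

Definition ffun_cons_max (v : T) (g : {ffun 'I_s -> T}) : {ffun 'I_s.+1 -> T} :=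
  [ffun i => if unlift ord_max i is Some j then g j else v].

Definition ffun2_cons_max (u v : T) (g : {ffun 'I_s * 'I_2 -> T}) :
    {ffun 'I_s.+1 * 'I_2 -> T} :=
  [ffun x => if unlift ord_max x.1 is Some j then g (j, x.2)
             else if x.2 == ord0 then u else v].

Lemma ffun_cons_max_max v g : ffun_cons_max v g ord_max = v.
Proof. by rewrite ffunE unlift_none. Qed.

Lemma ffun_cons_max_lift v g i : ffun_cons_max v g (lift ord_max i) = g i.
Proof. by rewrite ffunE liftK. Qed.

Lemma ffun2_cons_max_max0 u v g : ffun2_cons_max u v g (ord_max, ord0) = u.
Proof. by rewrite ffunE unlift_none. Qed.

Lemma ffun2_cons_max_max1 u v g : ffun2_cons_max u v g (ord_max, ord_max) = v.
Proof. by rewrite ffunE unlift_none. Qed.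

Lemma ffun2_cons_max_lift u v g k i :
  ffun2_cons_max u v g (lift ord_max i, k) = g (i, k).
Proof. by rewrite ffunE /= liftK. Qed.

Lemma big_ffun_ordS (R : Type) (idx : R) (op : Monoid.com_law idx)
    (F : {ffun 'I_s.+1 -> T} -> R) :
  \big[op/idx]_f F f = \big[op/idx]_v \big[op/idx]_g F (ffun_cons_max v g).
Proof.
rewrite pair_big /= (reindex (fun p => ffun_cons_max p.1 p.2)) //.
exists (fun f : {ffun 'I_s.+1 -> T} =>
          (f ord_max, [ffun i => f (lift ord_max i)])).
  move=> [v g] _; rewrite /= ffun_cons_max_max; congr pair.
  by apply/ffunP => i; rewrite ffunE ffun_cons_max_lift.
move=> f _; apply/ffunP => i /=.
by rewrite ffunE; case: unliftP => [j ->|->]; rewrite ?ffunE.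
Qed.

Lemma big_ffun2_ordS (R : Type) (idx : R) (op : Monoid.com_law idx)
    (F : {ffun 'I_s.+1 * 'I_2 -> T} -> R) :
  \big[op/idx]_f F f =
  \big[op/idx]_u \big[op/idx]_v \big[op/idx]_g F (ffun2_cons_max u v g).
Proof.
rewrite (eq_bigr _ (fun u _ => pair_big _ _ _)) pair_big /=.
rewrite (reindex (fun p => ffun2_cons_max p.1 p.2.1 p.2.2)) //.
exists (fun f : {ffun 'I_s.+1 * 'I_2 -> T} => (f (ord_max, ord0),
          (f (ord_max, ord_max), [ffun x => f (lift ord_max x.1, x.2)]))).
  move=> [u [v g]] _; rewrite /= ffun2_cons_max_max0 ffun2_cons_max_max1.
  by congr (_, (_, _)); apply/ffunP => -[i k]; rewrite ffunE ffun2_cons_max_lift.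
move=> f _; apply/ffunP => -[i k].
case: (unliftP ord_max i) => [j ->|->]; first by rewrite ffun2_cons_max_lift ffunE.
rewrite ffunE unlift_none /=.
by case: eqP => [-> // | /eqP /ord2_neq [[_ /eqP //] | [-> _ //]]].
Qed.

End FfunOrdS.

Section Counts.
Variables (n s : nat) (G : rel 'I_n).

Lemma VK_forallE (x : 'I_n -> bool) :
  VK s G x = \sum_(g : {ffun 'I_s -> 'I_n})
    ([forall i : 'I_s, forall j : 'I_s, (i < j) ==> G (g i) (g j)] &&
     [forall r, x (g r)]).
Proof.
apply: eq_bigr => g _; rewrite -mulnb !prodn_bool.
under eq_bigr => i _ do rewrite prodn_bool.
by rewrite prodn_bool.
Qed.

Lemma VKK2_forallE (a b : 'I_n -> bool) :
  VKK2 s G a b = \sum_(g : {ffun 'I_s * 'I_2 -> 'I_n})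
    [&& [forall i : 'I_s, forall j : 'I_s,
           (i != j) ==> G (g (i, ord0)) (g (j, ord_max))],
        [forall i, a (g (i, ord0))] & [forall i, b (g (i, ord_max))]].
Proof.
apply: eq_bigr => g _; rewrite big_split /= !prodn_bool -!mulnb.
under eq_bigr => i _ do rewrite prodn_bool.
by rewrite prodn_bool.
Qed.

Hypothesis Gsym : symmetric G.

Lemma hom_complete_ordS :
  hom (complete_graph s.+1) G = \sum_(v : 'I_n) VK s G (G v).
Proof.
rewrite hom_sum big_ffun_ordS; apply: eq_bigr => v _.
rewrite VK_forallE; apply: eq_bigr => g _; congr nat_of_bool.
rewrite (forall_neq_ordS _ (ffun_cons_max_max v g) (ffun_cons_max_max v g)
                           (ffun_cons_max_lift v g) (ffun_cons_max_lift v g)).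
rewrite (forall_neq_lt (R := fun i j => G (g i) (g j))) => [|i j]; last exact: Gsym.
congr andb; rewrite -[RHS]andbb; congr andb.
by apply/eq_forallb => r; apply: Gsym.
Qed.

Lemma hom_tensor_K2_ordS :
  hom (tensor_graph (complete_graph s.+1) (complete_graph 2)) G =
  \sum_(u : 'I_n) \sum_(v : 'I_n) VKK2 s G (G v) (G u).
Proof.
rewrite hom_sum big_ffun2_ordS; apply: eq_bigr => u _; apply: eq_bigr => v _.
rewrite VKK2_forallE; apply: eq_bigr => g _; congr nat_of_bool.
rewrite forall_tensor_K2 // => [|i j]; last by rewrite /complete_graph eq_sym.
rewrite /complete_graph (forall_neq_ordS _ (ffun2_cons_max_max0 u v g)
  (ffun2_cons_max_max1 u v g) (ffun2_cons_max_lift u v g ord0)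
  (ffun2_cons_max_lift u v g ord_max)).
congr andb; rewrite andbC; congr andb.
by apply/eq_forallb => i; apply: Gsym.
Qed.

End Counts.

Theorem proposition4p4 (n t : nat) (G : rel 'I_n) :
  simple_graph G -> 2 <= t ->
  (forall a b : 'I_n -> bool,
      VK t.-1 G a * VK t.-1 G b <= VKK2 t.-1 G a b) ->
  (hom (complete_graph t) G) ^ 2 <=
    hom (tensor_graph (complete_graph t) (complete_graph 2)) G.
Proof.
case: t => [|s] // [Gsym _] _ /= HVK.
rewrite (hom_complete_ordS s Gsym) (hom_tensor_K2_ordS s Gsym).
rewrite -mulnn big_distrl /=; apply: leq_sum => u _; rewrite big_distrr /=.
by apply: leq_sum => v _; rewrite mulnC HVK.
Qed.
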